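(* There is a nonnegative smooth function $f$ on $\mathbb{R}^d$ such that $f(x)=|x|^2$ if $|x|\le1$, $f(x)=2$ if $|x|\ge2$, and $|\nabla f(x)|+|\nabla^2f(x)|\le C_1\mathbf{1}_{\{|x|\le2\}}$ for some constant $C_1>0$; and such that for any constant $C_2>0$ there exists a constant $C_3>0$ such that for all $\delta>0$, $r\in[0,1]$ and $x,y\in\mathbb{R}^d$ with $|y|\le C_2\big((|x|+\delta)\wedge1\big)$, $$|y||\nabla f(x+ry)|\le C_3(f(x)+\delta),\qquad|y|^2|\nabla^2f(x+ry)|\le C_3(f(x)+\delta^2).$$ *)

(* R^d is 'rV[R]_d. *)
From HB Require Import structures.
From mathcomp Require Import all_boot all_order all_algebra.
From mathcomp Require Import all_classical all_reals all_analysis.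
Set Implicit Arguments. Unset Strict Implicit. Unset Printing Implicit Defensive.
Import Order.TTheory GRing.Theory Num.Theory.
Import numFieldNormedType.Exports.
Local Open Scope ring_scope.

Section Defs.
Context {R : realType} {d : nat}.

Definition ebasis (i : 'I_d) : 'rV[R]_d := delta_mx 0 i.

Definition enorm (x : 'rV[R]_d) : R := Num.sqrt (\sum_i x 0 i ^+ 2).

Definition frobnorm (A : 'M[R]_d) : R := Num.sqrt (\sum_i \sum_j A i j ^+ 2).

(* iterated partial derivative: dpartial [:: i1; ...; ik] f = D_i1 (... (D_ik f)) *)
Definition dpartial (s : seq 'I_d) (f : 'rV[R]_d -> R) : 'rV[R]_d -> R :=
  foldr (fun i g => fun x => 'D_(ebasis i) g x) f s.

Definition smooth (f : 'rV[R]_d -> R) : Prop :=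
  forall s : seq 'I_d,
    continuous (dpartial s f) /\
    (forall (i : 'I_d) (x : 'rV[R]_d), derivable (dpartial s f) x (ebasis i)).

Definition grad (f : 'rV[R]_d -> R) (x : 'rV[R]_d) : 'rV[R]_d :=
  \row_i dpartial [:: i] f x.

Definition hess (f : 'rV[R]_d -> R) (x : 'rV[R]_d) : 'M[R]_d :=
  \matrix_(i, j) dpartial [:: i; j] f x.

End Defs.

(* Take f x := g (|x|^2) ([cutoff]) with g t := t + S t * (2 - t) ([profile]),
   where the smooth step S ([step]) vanishes for t <= 1 and equals 1 for t >= 4.
   S is built from psi t := exp (-1/t) (t > 0), smooth because the family
   t^-k exp (-1/t) is closed under differentiation.  f is smooth because the
   algebra generated by the coordinates and the functions phi (|x|^2), phi smooth,
   is closed under partial derivatives.  As g' and g'' vanish beyond 4, grad f and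
   hess f are bounded and supported in |x| <= 2, and |grad f z| <= M min(|z|, 1).
   Put m := min(|x| + delta, 1).  Then |y| <= C2 m and |x + r y| <= 2 (|x| + |y|),
   so |grad f (x + r y)| <= 2 M (1 + C2) m; and m^2 <= 2 (f x + delta) and
   m^2 <= 2 (f x + delta^2) because f x = |x|^2 for |x| <= 1 and f x >= 1
   otherwise. *)

From HB Require Import structures.
From mathcomp Require Import all_boot all_order all_algebra.
From mathcomp Require Import all_classical all_reals all_analysis.
From mathcomp Require Import ring lra.
Set Implicit Arguments.
Unset Strict Implicit.
Unset Printing Implicit Defensive.
Import Order.TTheory GRing.Theory Num.Theory.
Import numFieldNormedType.Exports.

Local Open Scope ring_scope.
Local Open Scope classical_set_scope.

Section IteratedDerivability.
Variable R : realType.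
Implicit Types (f g h : R -> R) (n : nat) (t : R).

Fixpoint derivable_n n f : Prop :=
  if n is n.+1 then (forall t, derivable f t 1) /\ derivable_n n f^`() else True.

Definition smooth1 f := forall n, derivable_n n f.

Lemma derive1_is_derive f f' : (forall t, is_derive t 1 f (f' t)) -> f^`() = f'.
Proof. by move=> df; apply/funext => t; rewrite derive1E derive_val. Qed.

Lemma is_derive_derive1 f t : derivable f t 1 -> is_derive t 1 f (f^`() t).
Proof. by rewrite derive1E; apply: derivableP. Qed.

Lemma derivable_nS n f f' :
  (forall t, is_derive t 1 f (f' t)) -> derivable_n n f' -> derivable_n n.+1 f.
Proof. by move=> df f'n; split=> [t|]; [case: (df t) | rewrite (derive1_is_derive df)]. Qed.

Lemma derivable_nW n f : derivable_n n.+1 f -> derivable_n n f.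
Proof. by elim: n f => // n IH f [df /IH]. Qed.

Lemma derivable_n_cst n c : derivable_n n (cst c).
Proof.
by elim: n c => // n IH c; apply: (derivable_nS (f' := cst 0)).
Qed.

Lemma derivable_n_affine n (a b : R) : derivable_n n (fun t => a * t + b).
Proof.
case: n => //= n; apply: (derivable_nS (f' := cst a)); last exact: derivable_n_cst.
by move=> t; apply: is_derive_eq; rewrite addr0 [_%:A]mulr1.
Qed.

Lemma derivable_nD n f g :
  derivable_n n f -> derivable_n n g -> derivable_n n (fun t => f t + g t).
Proof.
elim: n f g => // n IH f g [df f'n] [dg g'n].
have dfg t : is_derive t 1 (fun t => f t + g t) (f^`()%classic t + g^`()%classic t).
  by apply: is_deriveD; apply: is_derive_derive1.
exact: derivable_nS dfg (IH _ _ f'n g'n).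
Qed.

Lemma derivable_nM n f g :
  derivable_n n f -> derivable_n n g -> derivable_n n (fun t => f t * g t).
Proof.
elim: n f g => // n IH f g fn gn; have [df f'n] := fn; have [dg g'n] := gn.
have dfg t : is_derive t 1 (fun t => f t * g t) (f^`()%classic t * g t + f t * g^`()%classic t).
  have := is_deriveM (is_derive_derive1 (df t)) (is_derive_derive1 (dg t)).
  by move=> /is_derive_eq; apply; rewrite addrC; congr (_ + _); apply: mulrC.
exact: derivable_nS dfg
  (derivable_nD (IH _ _ f'n (derivable_nW gn)) (IH _ _ (derivable_nW fn) g'n)).
Qed.

Lemma derivable_n_comp n f g :
  derivable_n n f -> derivable_n n g -> derivable_n n (f \o g).
Proof.
elim: n f g => // n IH f g [df f'n] gn; have [dg g'n] := gn.
have dfg t : is_derive t 1 (f \o g) (f^`()%classic (g t) * g^`()%classic t).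
  exact: is_derive1_comp (is_derive_derive1 (df (g t))) (is_derive_derive1 (dg t)).
exact: derivable_nS dfg (derivable_nM (IH _ _ f'n (derivable_nW gn)) g'n).
Qed.

Lemma derivable_nV n h :
  (forall t, h t != 0) -> derivable_n n h -> derivable_n n (fun t => (h t)^-1).
Proof.
move=> h0; elim: n => // n IH hn; have [dh h'n] := hn.
(* [- h' / h ^+ 2], written as a product so that [derivable_nM] applies *)
have dh' t : is_derive t 1 (fun t => (h t)^-1)
    ((h t)^-1 * ((h t)^-1 * (-1 * h^`()%classic t))).
  apply: is_derive_eq (is_deriveV (h0 t) (is_derive_derive1 (dh t))) _.
  by rewrite mulN1r !mulrN mulrA -invfM -expr2 scaleNr.
have hVn := IH (derivable_nW hn).
exact: derivable_nS dh' (derivable_nM hVn (derivable_nM hVn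
  (derivable_nM (derivable_n_cst _ _) h'n))).
Qed.

Lemma smooth1_derive1 f : smooth1 f -> smooth1 f^`().
Proof. by move=> sf n; case: (sf n.+1). Qed.

Lemma smooth1_derivable f t : smooth1 f -> derivable f t 1.
Proof. by move=> sf; case: (sf 1). Qed.

Lemma smooth1_continuous f : smooth1 f -> continuous f.
Proof.
by move=> sf t; exact/differentiable_continuous/derivable1_diffP/smooth1_derivable.
Qed.

Lemma derive1_eq0_gt f a c : (forall t, a < t -> f t = c) ->
  forall t, a < t -> f^`() t = 0.
Proof.
move=> fc t ta; rewrite derive1E (@near_eq_derive _ _ _ f (cst c)) ?derive_cst //.
by near=> s; apply: fc; near: s; exact: lt_nbhsr.
Unshelve. all: by end_near.
Qed.

Lemma continuous_vanishing_bounded h a : 0 <= a -> continuous h ->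
  (forall t, a < t -> h t = 0) -> exists M, 0 <= M /\ forall t, 0 <= t -> `|h t| <= M.
Proof.
move=> a0 ch h0.
have /(EVT_max a0)[c _ hc] : {within `[0, a], continuous (fun t => `|h t|)}.
  by apply: continuous_subspaceT => t; apply: continuous_comp (ch t) _; exact: norm_continuous.
exists `|h c|; split=> // t t0; have [ta|/h0->] := leP t a; last by rewrite normr0.
by apply: hc; rewrite in_itv /= t0 ta.
Qed.

End IteratedDerivability.

Section Psi.
Variable R : realType.
Implicit Types (k : nat) (t : R).

Definition psi k t : R := if 0 < t then t^-1 ^+ k * expR (- t^-1) else 0.

Lemma psi_le0 k t : t <= 0 -> psi k t = 0.
Proof. by move=> t0; rewrite /psi ltNge t0. Qed.

Lemma psi_gt0 k t : 0 < t -> 0 < psi k t.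
Proof. by move=> t0; rewrite /psi t0 mulr_gt0 ?expR_gt0 ?exprn_gt0 ?invr_gt0. Qed.

Lemma psi_ge0 k t : 0 <= psi k t.
Proof. by have [/(psi_gt0 k)/ltW | /(psi_le0 k)->] := ltP 0 t. Qed.

(* [u ^+ k.+1 / k.+1`! <= expR u] at [u = t^-1] *)
Lemma psi_le_norm k t : psi k t <= (k.+1)`!%:R * `|t|.
Proof.
have [t0|t0] := ltP 0 t; last by rewrite psi_le0 // mulr_ge0.
rewrite /psi t0 gtr0_norm // expRN.
set u := t^-1; have u0 : 0 < u by rewrite invr_gt0.
have fact0 : 0 < (k.+1)`!%:R :> R by rewrite ltr0n fact_gt0.
have ue : u ^+ k.+1 <= (k.+1)`!%:R * expR u.
  by rewrite -ler_pdivrMl // mulrC; have := expR_ge1Dxn k (ltW u0); lra.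
rewrite -[t]invrK -/u ler_pdivrMr ?expR_gt0 // -(@ler_pM2l _ u) //.
by rewrite mulrA mulrCA mulrV ?unitfE ?gt_eqF // mulr1 -exprS.
Qed.

Lemma psi_cvg0 k : psi k x @[x --> (0 : R)] --> 0.
Proof.
apply: (@squeeze_cvgr _ _ _ _ (cst 0) (fun x => (k.+1)`!%:R * `|x|)).
- by near=> x; rewrite psi_ge0 psi_le_norm.
- exact: cvg_cst.
- rewrite [X in _ --> X](_ : 0 = (k.+1)`!%:R * `|0 : R|); last by rewrite normr0 mulr0.
  by apply: cvgMr; exact: (@norm_continuous _ R 0).
Unshelve. all: by end_near.
Qed.

Lemma is_derive_psi_gt0 k t : 0 < t ->
  is_derive t 1 (fun s => s^-1 ^+ k * expR (- s^-1)) (psi k.+2 t - k%:R * psi k.+1 t).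
Proof.
move=> t0; rewrite /psi t0.
have dV : is_derive t 1 (fun s : R => s^-1) (- t ^- 2).
  have := is_deriveV (f := id) (lt0r_neq0 t0) (is_derive_id t 1).
  by move=> /is_derive_eq; apply; rewrite [_ *: 1]mulr1.
have dVk := is_deriveX k dV.
have dE : is_derive t 1 (expR \o (fun s => - s^-1)) (expR (- t^-1) * - - t ^- 2).
  exact: is_derive1_comp (is_deriveN dV).
rewrite (_ : (fun s => _) = (fun s : R => s^-1) ^+ k * (expR \o (fun s => - s^-1))).
  apply: is_derive_eq (is_deriveM dVk dE) _.
  rewrite exprfctE -!exprVn /GRing.scale /= opprK; set u := t^-1; set E := expR (- u).
  by case: k {dVk} => [|k]; rewrite /= ?mul0r ?mulr0 !exprS; ring.
by apply/funext => s; rewrite mulrfctE exprfctE.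
Qed.

Lemma is_derive_psi k t : is_derive t 1 (psi k) (psi k.+2 t - k%:R * psi k.+1 t).
Proof.
have [t0|t0|->] := ltgtP t 0.
- rewrite !psi_le0 ?ltW // mulr0 subr0.
  apply: (@near_eq_is_derive _ _ _ (cst 0)).
  by near=> s; rewrite psi_le0 //; apply: ltW; near: s; exact: lt_nbhsl.
- apply: (near_eq_is_derive _ (is_derive_psi_gt0 k t0)).
  by near=> s; rewrite /psi ifT //; near: s; exact: lt_nbhsr.
- rewrite !psi_le0 // mulr0 subr0.
  (* at 0 the difference quotient [psi k h / h] is exactly [psi k.+1 h] *)
  have quotE : (fun h : R => h^-1 *: ((psi k \o shift 0) (h *: 1) - psi k 0)) = psi k.+1.
    apply/funext => h /=; rewrite [psi k 0]psi_le0 // subr0 addr0 [_ *: 1]mulr1.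
    by rewrite /psi; case: ifP => h0; rewrite ?scaler0 // exprS -mulrA.
  have quot0 : psi k.+1 h @[h --> (0 : R)^'] --> 0.
    exact: cvg_within_filter (psi_cvg0 k.+1).
  apply: DeriveDef; first by apply/cvg_ex; exists 0; rewrite /= quotE.
  by rewrite /derive quotE; apply: cvg_lim.
Unshelve. all: by end_near.
Qed.

Lemma smooth1_psi k : smooth1 (psi k).
Proof.
move=> n; elim: n k => // n IH k.
apply: derivable_nS (is_derive_psi k) _.
under eq_fun do rewrite -mulNr.
exact: derivable_nD (IH _) (derivable_nM (derivable_n_cst _ _) (IH _)).
Qed.
End Psi.

Section Profile.
Variable R : realType.
Implicit Types t : R.

Definition step t : R := psi 0 (t - 1) / (psi 0 (t - 1) + psi 0 (4 - t)).

Definition profile t : R := t + step t * (2 - t).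

Lemma step_den_gt0 t : 0 < psi 0 (t - 1) + psi 0 (4 - t).
Proof.
have := psi_ge0 0 (t - 1); have := psi_ge0 0 (4 - t).
have [t1|t1] := ltP 1 t; first by have := @psi_gt0 R 0 (t - 1); lra.
by have := @psi_gt0 R 0 (4 - t); lra.
Qed.

Lemma step_ge0 t : 0 <= step t.
Proof. by rewrite divr_ge0 ?psi_ge0 // ltW ?step_den_gt0. Qed.

Lemma step_le1 t : step t <= 1.
Proof. by rewrite ler_pdivrMr ?step_den_gt0 // mul1r lerDl psi_ge0. Qed.

Lemma step_eq0 t : t <= 1 -> step t = 0.
Proof. by move=> t1; rewrite /step psi_le0 ?mul0r ?subr_le0. Qed.

Lemma step_eq1 t : 4 <= t -> step t = 1.
Proof.
move=> t4; rewrite /step [psi 0 (4 - t)]psi_le0 ?subr_le0 // addr0 divff //.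
by apply/lt0r_neq0/psi_gt0; lra.
Qed.

Lemma profile_id t : t <= 1 -> profile t = t.
Proof. by move=> t1; rewrite /profile step_eq0 // mul0r addr0. Qed.

Lemma profile_eq2 t : 4 <= t -> profile t = 2.
Proof. by move=> t4; rewrite /profile step_eq1 // mul1r addrC subrK. Qed.

Lemma profile_ge0 t : 0 <= t -> 0 <= profile t.
Proof. by rewrite /profile => t0; have := step_ge0 t; have := step_le1 t; nra. Qed.

Lemma profile_ge1 t : 1 <= t -> 1 <= profile t.
Proof. by rewrite /profile => t1; have := step_ge0 t; have := step_le1 t; nra. Qed.

Lemma smooth1_step : smooth1 step.
Proof.
have psi_affine a b : smooth1 (fun t => psi 0 (a * t + b)).
  by move=> n; exact: derivable_n_comp (smooth1_psi R 0 n) (derivable_n_affine n a b).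
have u : smooth1 (fun t => psi 0 (t - 1)).
  rewrite (_ : (fun t => _) = fun t => psi 0 (1 * t + -1)); first exact: psi_affine.
  by apply/funext => t; rewrite mul1r.
have v : smooth1 (fun t => psi 0 (4 - t)).
  rewrite (_ : (fun t => _) = fun t => psi 0 (-1 * t + 4)); first exact: psi_affine.
  by apply/funext => t; rewrite mulN1r addrC.
move=> n; apply: derivable_nM (u n) (derivable_nV _ (derivable_nD (u n) (v n))) => t.
by rewrite gt_eqF ?step_den_gt0.
Qed.

Lemma smooth1_profile : smooth1 profile.
Proof.
move=> n; rewrite (_ : profile = fun t => (1 * t + 0) + step t * (-1 * t + 2)).
  apply: derivable_nD (derivable_n_affine _ _ _) _.
  exact: derivable_nM (smooth1_step n) (derivable_n_affine _ _ _).
by apply/funext => t; rewrite /profile mul1r addr0 mulN1r [- t + _]addrC.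
Qed.

End Profile.
Arguments profile {R}.

Section RadialFunctions.
Variables (R : realType) (d : nat).
Local Notation V := 'rV[R]_d.
Implicit Types (x y v : V) (phi : R -> R).

Definition sqnorm x : R := \sum_i x 0 i ^+ 2.

Lemma sqnorm_ge0 x : 0 <= sqnorm x.
Proof. by apply: sumr_ge0 => i _; apply: sqr_ge0. Qed.

Lemma enorm_ge0 x : 0 <= enorm x.
Proof. exact: sqrtr_ge0. Qed.

Lemma frobnorm_ge0 (A : 'M[R]_d) : 0 <= frobnorm A.
Proof. exact: sqrtr_ge0. Qed.

Lemma enorm_sqr x : enorm x ^+ 2 = sqnorm x.
Proof. by rewrite sqr_sqrtr // sqnorm_ge0. Qed.

Lemma enormZ (a : R) x : enorm (a *: x) = `|a| * enorm x.
Proof.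
rewrite /enorm -sqrtr_sqr -sqrtrM ?sqr_ge0 // mulr_sumr.
by congr Num.sqrt; apply: eq_bigr => i _; rewrite mxE exprMn.
Qed.

Lemma sqnorm_addZ_le x y (r : R) : 0 <= r -> r <= 1 ->
  sqnorm (x + r *: y) <= 2 * sqnorm x + 2 * sqnorm y.
Proof.
move=> r0 r1; rewrite /sqnorm !mulr_sumr -big_split /=.
apply: ler_sum => i _; rewrite !mxE.
have : (r * y 0 i) ^+ 2 <= y 0 i ^+ 2.
  by rewrite exprMn ler_piMl ?sqr_ge0 // expr_le1.
by have := sqr_ge0 (x 0 i - r * y 0 i); nra.
Qed.

Lemma enorm_addZ_le x y (r : R) : 0 <= r -> r <= 1 ->
  enorm (x + r *: y) <= 2 * (enorm x + enorm y).
Proof.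
move=> r0 r1; rewrite -ler_sqr ?nnegrE ?mulr_ge0 ?addr_ge0 ?enorm_ge0 //.
rewrite enorm_sqr (le_trans (sqnorm_addZ_le _ _ r0 r1)) // -!enorm_sqr.
by have := enorm_ge0 x; have := enorm_ge0 y; nra.
Qed.

Lemma is_derive_coord x v j : is_derive x v (fun y : V => y 0 j) (v 0 j).
Proof.
have @c : {linear V -> R}.
  by exists (fun y : V => y 0 j); do 2![eexists]; do ?[constructor];
     rewrite ?mxE// => ? *; rewrite ?mxE//; move=> ?; rewrite !mxE.
rewrite (_ : (fun _ => _) = c) //; have cc : continuous c := @coord_continuous _ _ _ _ _.
apply: DeriveDef; first exact/diff_derivable/linear_differentiable.
by rewrite deriveE ?diff_lin //; exact: linear_differentiable.
Qed.

Lemma differentiable_sqnorm x : differentiable sqnorm x.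
Proof.
rewrite (_ : sqnorm = \sum_i (fun y : V => y 0 i * y 0 i)).
  by apply: differentiable_sum => i; apply: differentiableM; exact: differentiable_coord.
by apply/funext => y; rewrite fct_sumE; apply: eq_bigr => i _; rewrite expr2.
Qed.

Lemma ebasisE i j : (ebasis i : V) 0 j = (i == j)%:R.
Proof. by rewrite /ebasis mxE eqxx eq_sym. Qed.

Lemma is_derive_sqnorm x i : is_derive x (ebasis i) sqnorm (2 * x 0 i).
Proof.
rewrite (_ : sqnorm = \sum_j (fun y : V => y 0 j * y 0 j)); last first.
  by apply/funext => y; rewrite fct_sumE; apply: eq_bigr => j _; rewrite expr2.
have dsq j : is_derive x (ebasis i) (fun y : V => y 0 j * y 0 j) (2 * x 0 j * (i == j)%:R).
  apply: is_derive_eq (is_deriveM (is_derive_coord x _ j) (is_derive_coord x _ j)) _.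
  by rewrite ebasisE /GRing.scale /=; ring.
apply: is_derive_eq (is_derive_sum dsq) _.
rewrite (bigD1 i) //= big1 => [|j ji]; first by rewrite eqxx mulr1 addr0.
by rewrite eq_sym (negbTE ji) mulr0.
Qed.

Lemma is_derive_radial phi x i : derivable phi (sqnorm x) 1 ->
  is_derive x (ebasis i) (phi \o sqnorm) (2 * x 0 i * phi^`()%classic (sqnorm x)).
Proof.
move=> /derivable1_diffP dphi; have dsq := differentiable_sqnorm x.
apply: DeriveDef; first exact/diff_derivable/differentiable_comp.
rewrite deriveE; last exact: differentiable_comp.
rewrite diff_comp //= diff1E // -deriveE //.
by have [_ ->] := is_derive_sqnorm x i.
Qed.

Inductive radial_alg : (V -> R) -> Prop :=
  | RAcst c : radial_alg (cst c)
  | RAcoord j : radial_alg (fun x => x 0 j)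
  | RAadd f g : radial_alg f -> radial_alg g -> radial_alg (fun x => f x + g x)
  | RAmul f g : radial_alg f -> radial_alg g -> radial_alg (fun x => f x * g x)
  | RAradial phi : smooth1 phi -> radial_alg (phi \o sqnorm).

Lemma radial_alg_differentiable h x : radial_alg h -> differentiable h x.
Proof.
move=> ha; elim: ha x => [c|j|f g _ df _ dg|f g _ df _ dg|phi sphi] x.
- exact: differentiable_cst.
- exact: differentiable_coord.
- exact: differentiableD.
- exact: differentiableM.
- apply: differentiable_comp (differentiable_sqnorm x) _.
  exact/derivable1_diffP/smooth1_derivable.
Qed.

Lemma radial_alg_is_derive h i : radial_alg h ->
  exists2 h', radial_alg h' & forall x, is_derive x (ebasis i) h (h' x).
Proof.
elim=> [c|j|f g _ [f' af' df] _ [g' ag' dg]|f g af [f' af' df] ag [g' ag' dg]|phi sphi].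
- by exists (cst 0) => [|x]; [exact: RAcst | exact: is_derive_cst].
- by exists (cst ((ebasis i : V) 0 j)) => [|x]; [exact: RAcst | exact: is_derive_coord].
- by exists (fun x => f' x + g' x) => [|x]; [exact: RAadd | exact: is_deriveD].
- exists (fun x => f x * g' x + g x * f' x) => [|x]; first by apply: RAadd; apply: RAmul.
  exact: is_deriveM.
- exists (fun x => 2 * x 0 i * phi^`()%classic (sqnorm x)) => [|x].
    by apply: RAmul (RAmul (RAcst 2) (RAcoord i)) (RAradial (smooth1_derive1 sphi)).
  exact/is_derive_radial/smooth1_derivable.
Qed.

Lemma radial_alg_dpartial s h : radial_alg h -> radial_alg (dpartial s h).
Proof.
elim: s => //= i s IH /IH ha; have [h' ah' dh] := radial_alg_is_derive i ha.
by rewrite (_ : (fun x => _) = h') //; apply/funext => x; have [_ ->] := dh x.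
Qed.

Lemma smooth_radial_alg h : radial_alg h -> smooth h.
Proof.
move=> ha s; have has := radial_alg_dpartial s ha; split.
  by move=> x; exact/differentiable_continuous/radial_alg_differentiable.
by move=> i x; have [h' _ dh] := radial_alg_is_derive i has; case: (dh x).
Qed.

Lemma dpartial_radial phi i : smooth1 phi ->
  dpartial [:: i] (phi \o sqnorm) = fun x => 2 * x 0 i * phi^`()%classic (sqnorm x).
Proof.
move=> sphi; apply/funext => x /=.
by have [_ ->] := is_derive_radial i (smooth1_derivable (t := sqnorm x) sphi).
Qed.

Lemma grad_radial phi x : smooth1 phi ->
  grad (phi \o sqnorm) x = (2 * phi^`()%classic (sqnorm x)) *: x.
Proof. by move=> sphi; apply/rowP => i; rewrite !mxE dpartial_radial // mulrAC. Qed.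

Lemma enorm_grad_radial phi x : smooth1 phi ->
  enorm (grad (phi \o sqnorm) x) = 2 * `|phi^`()%classic (sqnorm x)| * enorm x.
Proof. by move=> sphi; rewrite grad_radial // enormZ normrM ger0_norm. Qed.

Lemma hess_radial phi x i j : smooth1 phi ->
  hess (phi \o sqnorm) x i j = 2 * (i == j)%:R * phi^`()%classic (sqnorm x)
    + 4 * (x 0 i * x 0 j) * phi^`()^`()%classic (sqnorm x).
Proof.
move=> sphi; rewrite mxE -[dpartial _ _]/(dpartial [:: i] (dpartial [:: j] _)).
rewrite dpartial_radial //=.
have d2x : is_derive x (ebasis i) (fun y : V => 2 * y 0 j) (2 * (i == j)%:R).
  apply: is_derive_eq (is_deriveM (is_derive_cst (2 : R) x _) (is_derive_coord x _ j)) _.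
  by rewrite ebasisE /GRing.scale /=; ring.
have dphi' := is_derive_radial i (smooth1_derivable (t := sqnorm x) (smooth1_derive1 sphi)).
by have [_ ->] := is_deriveM d2x dphi'; rewrite /GRing.scale /=; ring.
Qed.

Lemma frobnorm_hess_radial_sqr phi x : smooth1 phi ->
  frobnorm (hess (phi \o sqnorm) x) ^+ 2 <= 8 * d%:R ^+ 2 * phi^`()%classic (sqnorm x) ^+ 2
    + 32 * sqnorm x ^+ 2 * phi^`()^`()%classic (sqnorm x) ^+ 2.
Proof.
move=> sphi; set a := phi^`()%classic (sqnorm x); set b := phi^`()^`()%classic (sqnorm x).
have E1 : \sum_(i < d) \sum_(j < d) (8 * a ^+ 2) = 8 * d%:R ^+ 2 * a ^+ 2.
  by rewrite !sumr_const !card_ord; ring.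
have sqnorm_sqr : sqnorm x ^+ 2 = \sum_i \sum_j x 0 i ^+ 2 * x 0 j ^+ 2.
  by rewrite expr2 /sqnorm mulr_suml; apply: eq_bigr => i _; rewrite mulr_sumr.
have E2 : \sum_i \sum_j 32 * (x 0 i * x 0 j * b) ^+ 2 = 32 * sqnorm x ^+ 2 * b ^+ 2.
  rewrite mulrAC sqnorm_sqr mulr_sumr; apply: eq_bigr => i _.
  by rewrite mulr_sumr; apply: eq_bigr => j _; ring.
rewrite -E1 -E2 /frobnorm sqr_sqrtr; last by do 2!(apply: sumr_ge0 => ? _); exact: sqr_ge0.
rewrite -big_split; apply: ler_sum => i _; rewrite -big_split; apply: ler_sum => j _ /=.
rewrite hess_radial // -/a -/b -[4 * _ * b]mulrA; set c := _ * b.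
have := sqr_ge0 (2 * a - 4 * c); have := sqr_ge0 a; have := sqr_ge0 c.
by case: (i == j); rewrite /= ?mul1r ?mulr1 ?mulr0 ?mul0r ?add0r; nra.
Qed.

End RadialFunctions.

Section Arithmetic.
Variable R : realFieldType.
Implicit Types a b z delta C F : R.

Lemma min1_sqr_le a delta F : 0 <= a -> 0 < delta ->
  (a <= 1 -> F = a ^+ 2) -> (1 < a -> 1 <= F) ->
  Num.min (a + delta) 1 ^+ 2 <= 2 * (F + delta) /\
  Num.min (a + delta) 1 ^+ 2 <= 2 * (F + delta ^+ 2).
Proof.
move=> a0 d0 Fs Fl; rewrite minEle.
have [a1|a1] := leP a 1; last by have := Fl a1; case: (leP (a + delta) 1); split; nra.
rewrite (Fs a1); have := sqr_ge0 (a - delta).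
have [d1|d1] := leP delta 1; last by case: (leP (a + delta) 1); split; nra.
have : delta ^+ 2 <= delta by rewrite expr2 ler_piMl // ltW.
by case: (leP (a + delta) 1); split; nra.
Qed.

Lemma min1_perturb_le z a b delta C : 0 <= a -> 0 < delta -> 0 <= C ->
  z <= 2 * (a + b) -> b <= C * Num.min (a + delta) 1 ->
  Num.min z 1 <= 2 * (1 + C) * Num.min (a + delta) 1.
Proof.
by move=> a0 d0 C0 za; rewrite !minEle; case: (leP z 1); case: (leP (a + delta) 1); nra.
Qed.

End Arithmetic.

Section Cutoff.
Variables (R : realType) (d : nat).
Local Notation V := 'rV[R]_d.
Implicit Types (x z : V) (t : R).

Definition cutoff : V -> R := profile \o @sqnorm R d.

Lemma smooth_cutoff : smooth cutoff.
Proof. exact/smooth_radial_alg/RAradial/smooth1_profile. Qed.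

Lemma cutoff_ge0 x : 0 <= cutoff x.
Proof. exact/profile_ge0/sqnorm_ge0. Qed.

Lemma cutoff_eq_sqr x : enorm x <= 1 -> cutoff x = enorm x ^+ 2.
Proof. by move=> x1; rewrite /cutoff /= -enorm_sqr profile_id // expr_le1 ?enorm_ge0. Qed.

Lemma cutoff_ge1 x : 1 < enorm x -> 1 <= cutoff x.
Proof.
by move=> x1; apply: profile_ge1; rewrite -enorm_sqr exprn_ege1 // ltW.
Qed.

Lemma cutoff_eq2 x : 2 <= enorm x -> cutoff x = 2.
Proof. by move=> x2; rewrite /cutoff /= profile_eq2 // -enorm_sqr; nra. Qed.

Lemma derive1_profile_gt4 t : 4 < t -> profile^`() t = 0 /\ profile^`()^`() t = 0.
Proof.
have d1 := derive1_eq0_gt (f := @profile R) (c := 2) (fun s (s4 : 4 < s) => profile_eq2 (ltW s4)).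
by move=> t4; split; [exact: d1 t4 | exact: derive1_eq0_gt d1 _ t4].
Qed.

Lemma derive1_profile_bounded : exists M, 0 <= M /\ forall t, 0 <= t ->
  `|profile^`() t| <= M /\ `|profile^`()^`() t| <= M.
Proof.
have bounded g : smooth1 g -> (forall t, 4 < t -> g t = 0) ->
    exists M, 0 <= M /\ forall t, 0 <= t -> `|g t| <= M.
  by move=> sg; apply: continuous_vanishing_bounded (ler0n _ 4) (smooth1_continuous sg).
have sp' := smooth1_derive1 (smooth1_profile R).
have [M1 [M10 hM1]] := bounded _ sp' (fun t ht => (derive1_profile_gt4 ht).1).
have [M2 [M20 hM2]] := bounded _ (smooth1_derive1 sp') (fun t ht => (derive1_profile_gt4 ht).2).
exists (M1 + M2); split=> [|t t0]; first exact: addr_ge0.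
by have := hM1 t t0; have := hM2 t t0; split; lra.
Qed.

Lemma enorm_grad_cutoff_le :
  exists M, 0 <= M /\ forall z, enorm (grad cutoff z) <= M * Num.min (enorm z) 1.
Proof.
have [M [M0 hM]] := derive1_profile_bounded.
exists (4 * M); split=> [|z]; first lra.
rewrite enorm_grad_radial; last exact: smooth1_profile.
have z0 := enorm_ge0 z; have [z2|z2] := leP (enorm z) 2; last first.
  rewrite (derive1_profile_gt4 _).1 ?normr0 ?mulr0 ?mul0r; last by rewrite -enorm_sqr; nra.
  by rewrite mulr_ge0 ?le_min ?z0 //; lra.
have [+ _] := hM _ (sqnorm_ge0 z); have : enorm z <= 2 * Num.min (enorm z) 1.
  by rewrite minEle; case: (leP (enorm z) 1) => ?; lra.
by have := normr_ge0 (profile^`() (sqnorm z)); nra.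
Qed.

Lemma frobnorm_hess_cutoff_le : exists H, 0 <= H /\ forall z, frobnorm (hess cutoff z) <= H.
Proof.
have [M [M0 hM]] := derive1_profile_bounded.
exists (Num.sqrt (8 * d%:R ^+ 2 * M ^+ 2 + 512 * M ^+ 2)); split=> [|z]; first exact: sqrtr_ge0.
rewrite -ler_sqr ?nnegrE ?sqrtr_ge0 // [X in _ <= X]sqr_sqrtr; last first.
  by rewrite addr_ge0 ?mulr_ge0 ?sqr_ge0 ?ler0n.
apply: le_trans (frobnorm_hess_radial_sqr _ (smooth1_profile R)) _.
have q0 := sqnorm_ge0 z; have [aM bM] := hM _ q0.
set a := _^`() _ in aM *; set b := _^`()^`() _ in bM *.
have sqr_le (u : R) : `|u| <= M -> u ^+ 2 <= M ^+ 2.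
  by move=> xM; rewrite -real_normK ?num_real // lerXn2r ?nnegrE.
have qbM : sqnorm z ^+ 2 * b ^+ 2 <= 16 * M ^+ 2.
  have [z4|/derive1_profile_gt4[_ b0]] := leP (sqnorm z) 4.
    by apply: ler_pM; rewrite ?sqr_ge0 ?sqr_le //; nra.
  by rewrite /b b0 expr0n mulr0 mulr_ge0 ?sqr_ge0.
by have := sqr_le _ aM; have := sqr_ge0 (d%:R : R); nra.
Qed.

Lemma grad_hess_cutoff_eq0 z : 2 < enorm z ->
  enorm (grad cutoff z) = 0 /\ frobnorm (hess cutoff z) = 0.
Proof.
move=> z2; have [p1 p2] : profile^`() (sqnorm z) = 0 /\ profile^`()^`() (sqnorm z) = 0.
  by apply: derive1_profile_gt4; rewrite -enorm_sqr; nra.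
split; first by rewrite enorm_grad_radial ?p1 ?normr0 ?mulr0 ?mul0r //; exact: smooth1_profile.
apply/eqP; rewrite -sqrf_eq0 eq_le sqr_ge0 andbT.
apply: le_trans (frobnorm_hess_radial_sqr z (smooth1_profile R)) _.
by rewrite p1 p2 !expr0n /= !mulr0 addr0.
Qed.

Lemma cutoff_C1_bound : exists C1 : R, 0 < C1 /\
  forall x : V, enorm (grad cutoff x) + frobnorm (hess cutoff x)
                <= C1 * ((enorm x <= 2 :> R) : bool)%:R.
Proof.
have [M [M0 hM]] := enorm_grad_cutoff_le.
have [H [H0 hH]] := frobnorm_hess_cutoff_le.
exists (M + H + 1); split=> [|x]; first lra.
have [x2|/grad_hess_cutoff_eq0[-> ->]] := leP (enorm x) 2; last by rewrite mulr0n mulr0 addr0.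
rewrite mulr1n mulr1; have := hM x; have := hH x; have := enorm_ge0 x.
by rewrite minEle; case: (leP (enorm x) 1); nra.
Qed.

Lemma cutoff_estimates (C2 : R) : 0 < C2 ->
  exists C3 : R, 0 < C3 /\
    forall (delta r : R) (x y : V),
      0 < delta -> 0 <= r -> r <= 1 ->
      enorm y <= C2 * Num.min (enorm x + delta) 1 ->
      enorm y * enorm (grad cutoff (x + r *: y)) <= C3 * (cutoff x + delta) /\
      enorm y ^+ 2 * frobnorm (hess cutoff (x + r *: y)) <= C3 * (cutoff x + delta ^+ 2).
Proof.
move=> C20; have [M [M0 hM]] := enorm_grad_cutoff_le.
have [H [H0 hH]] := frobnorm_hess_cutoff_le.
have K0 : 0 <= M * C2 * (1 + C2) by rewrite !mulr_ge0 ?addr_ge0 // ltW.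
have L0 : 0 <= C2 ^+ 2 * H by rewrite mulr_ge0 ?sqr_ge0.
exists (4 * (M * C2 * (1 + C2)) + 2 * (C2 ^+ 2 * H) + 1); split=> [|delta r x y d0 r0 r1 hy].
  lra.
have [m1 m2] := min1_sqr_le (enorm_ge0 x) d0 (@cutoff_eq_sqr x) (@cutoff_ge1 x).
have hz := min1_perturb_le (enorm_ge0 x) d0 (ltW C20) (enorm_addZ_le x y r0 r1) hy.
set m := Num.min (enorm x + delta) 1 in hy m1 m2 hz.
have hG := le_trans (hM (x + r *: y)) (ler_wpM2l M0 hz).
have m0 : 0 <= m by rewrite le_min ler01 addr_ge0 ?enorm_ge0 ?ltW.
have F0 := cutoff_ge0 x; have y0 := enorm_ge0 y.
split.
  apply: le_trans (ler_pM y0 (enorm_ge0 _) hy hG) _.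
  rewrite (_ : C2 * m * _ = 2 * (M * C2 * (1 + C2)) * m ^+ 2); last by ring.
  apply: le_trans (ler_wpM2l _ m1) _; first by rewrite mulr_ge0.
  have Fd : 0 < cutoff x + delta by lra.
  nra.
have y2 : enorm y ^+ 2 <= (C2 * m) ^+ 2 by rewrite ler_sqr ?nnegrE ?mulr_ge0 // ltW.
apply: le_trans (ler_pM (sqr_ge0 _) (frobnorm_ge0 _) y2 (hH _)) _.
rewrite (_ : (C2 * m) ^+ 2 * H = C2 ^+ 2 * H * m ^+ 2); last by ring.
apply: le_trans (ler_wpM2l L0 m2) _.
have Fd : 0 < cutoff x + delta ^+ 2 by have := exprn_gt0 2 d0; lra.
nra.
Qed.

End Cutoff.
Arguments cutoff {R d}.

Theorem lemma5p2 (R : realType) (d : nat) :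
  exists f : 'rV[R]_d -> R,
    (forall x, 0 <= f x) /\
    smooth f /\
    (forall x, enorm x <= 1 -> f x = enorm x ^+ 2) /\
    (forall x, 2 <= enorm x -> f x = 2) /\
    (exists C1 : R, 0 < C1 /\
       forall x, enorm (grad f x) + frobnorm (hess f x)
                 <= C1 * ((enorm x <= 2 :> R) : bool)%:R) /\
    (forall C2 : R, 0 < C2 ->
       exists C3 : R, 0 < C3 /\
         forall (delta r : R) (x y : 'rV[R]_d),
           0 < delta -> 0 <= r -> r <= 1 ->
           enorm y <= C2 * Num.min (enorm x + delta) 1 ->
           enorm y * enorm (grad f (x + r *: y)) <= C3 * (f x + delta) /\
           enorm y ^+ 2 * frobnorm (hess f (x + r *: y))
             <= C3 * (f x + delta ^+ 2)).
Proof.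
exists cutoff; split; first exact: cutoff_ge0.
split; first exact: smooth_cutoff.
split; first exact: cutoff_eq_sqr.
split; first exact: cutoff_eq2.
split; first exact: cutoff_C1_bound.
exact: cutoff_estimates.
Qed.
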